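(* Let $N\ge1$ and $1\le m\le N$ be integers, and let $D_{N,m}=|D_{N,m}\rangle\langle D_{N,m}|$ be the projector onto the Dicke state with $m$ excitations. Then $C_S(D_{N,m})\le m(2m+3)N+1$.
   Context: The Dicke state is $|D_{N,m}\rangle=\binom{N}{m}^{-1/2}\sum_\pi|0\rangle^{\otimes(N-m)}|1\rangle^{\otimes m}$, the normalized uniform superposition of all $N$-bit computational basis states of Hamming weight $m$. $\mathbb{I},\sigma_X,\sigma_Y,\sigma_Z$ are the identity and Pauli matrices. The notation $\sum_\pi \mathbb{I}^{\otimes j}\otimes A^{\otimes (N-j)}$ denotes the sum, over all distinct placements, of tensor products in which exactly $j$ of the $N$ factors are $\mathbb{I}$ and the other $N-j$ are $A$ (each distinct arrangement counted once). Measurement complexity: for an $N$-qubit permutation-invariant operator $\rho$, $C_S(\rho)$ is the minimal $n_A$ such that there exist real $b_i,c_i,d_i$ and real $\alpha_{ij}$ ($1\le i\le n_A$, $0\le j\le N$) with $\rho=\sum_{i=1}^{n_A}\sum_{j=0}^{N}\alpha_{ij}\sum_\pi\mathbb{I}^{\otimes j}\otimes A_i^{\otimes(N-j)}$, $A_i=b_i\sigma_X+c_i\sigma_Y+d_i\sigma_Z$. *)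

From HB Require Import structures.
From mathcomp Require Import all_boot all_order all_algebra all_field.
Set Implicit Arguments. Unset Strict Implicit. Unset Printing Implicit Defensive.
Import Order.TTheory GRing.Theory Num.Theory.
Local Open Scope ring_scope.

(* Computational basis states of N qubits: bitstrings x : 'I_N -> bool
   (false = |0>, true = |1>). *)
Definition bits (N : nat) := {ffun 'I_N -> bool}.

(* An N-qubit operator, given by its matrix entries <x| rho |y>. *)
Definition op (N : nat) := bits N -> bits N -> algC.

Definition qop := bool -> bool -> algC.

Definition id2 : qop := fun a b => (a == b)%:R.
Definition sigmaX : qop := fun a b => (a != b)%:R.
Definition sigmaY : qop := fun a b =>
  match a, b with
  | false, true => - 'i
  | true, false => 'i
  | _, _ => 0
  end.
Definition sigmaZ : qop := fun a b =>
  if a == b then (if a then -1 else 1) else 0.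

Definition pauliA (b c d : algC) : qop :=
  fun u v => b * sigmaX u v + c * sigmaY u v + d * sigmaZ u v.

Definition tens (N : nat) (A : 'I_N -> qop) : op N :=
  fun x y => \prod_(k < N) A k (x k) (y k).

(* sum_pi I^{(x) j} (x) A^{(x)(N-j)}: sum over all placements, i.e. over all
   sets S of j positions carrying the identity, the others carrying A. *)
Definition symsum (N j : nat) (A : qop) : op N :=
  fun x y => \sum_(S : {set 'I_N} | #|S| == j)
               tens (fun k => if k \in S then id2 else A) x y.

Definition has_decomp (N : nat) (rho : op N) (nA : nat) : Prop :=
  exists (b c d : 'I_nA -> algC) (alpha : 'I_nA -> 'I_N.+1 -> algC),
    (forall i, b i \is Num.real) /\ (forall i, c i \is Num.real) /\
    (forall i, d i \is Num.real) /\ (forall i j, alpha i j \is Num.real) /\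
    forall x y : bits N,
      rho x y = \sum_(i < nA) \sum_(j < N.+1)
                  alpha i j * symsum (nat_of_ord j) (pauliA (b i) (c i) (d i)) x y.

(* C_S(rho) <= K  iff  some decomposition uses at most K directions
   (C_S(rho) is the minimal such n_A). *)
Definition CS_le (N : nat) (rho : op N) (K : nat) : Prop :=
  exists nA, (nA <= K)%N /\ has_decomp rho nA.

Definition weight (N : nat) (x : bits N) : nat := #|[set k | x k]|.

Definition dicke (N m : nat) (x : bits N) : algC :=
  if weight x == m then (sqrtC ('C(N, m))%:R)^-1 else 0.

Definition dicke_proj (N m : nat) : op N :=
  fun x y => dicke m x * (dicke m y)^*.

(* Along one direction A, the operators sum_pi I^(x)j (x) A^(x)(N-j), 0 <= j <= N,
   span the same space as the tensor powers (s I + A)^(x)N for N + 1 distinct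
   values of s.  For A = Re w sigma_X + Im w sigma_Y + sigma_Z the entry
   <x|(s I + A)^(x)N|y> is (s+1)^a (s-1)^p conj(w)^u w^v, where a, p, u, v count
   the positions k with (x_k, y_k) = 00, 11, 01, 10, while
   <x|D_{N,m}|y> = [u = v = m - p] / C(N,m).  The dependence on (a, p) is matched
   by Vandermonde interpolation in (s-1)/(s+1).  The dependence on (u, v) is
   matched by averaging over w = rho zeta^k: over the M-th roots of unity zeta,
   which kills u <> v as long as u, v < M, and over the radii rho = 1..N, which
   isolates one value u + v = 2n.  For n = 1..m this takes (4n+1) N directions
   (M = 4n+1), and sigma_Z (w = 0) handles the diagonal u = v = 0: in total
   m(2m+3) N + 1 directions. *)

From HB Require Import structures.
From mathcomp Require Import all_boot all_order all_algebra all_field.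
From mathcomp Require Import zify ring.
Set Implicit Arguments. Unset Strict Implicit. Unset Printing Implicit Defensive.
Import Order.TTheory GRing.Theory Num.Theory.
Local Open Scope ring_scope.

Definition tpow N (B : qop) : op N := fun x y => \prod_(k < N) B (x k) (y k).

Definition shifted (s : algC) (A : qop) : qop := fun u v => s * id2 u v + A u v.

Lemma sum_expr_symsum N (A : qop) (s : algC) (x y : bits N) :
  \sum_(j < N.+1) s ^+ j * symsum j A x y = tpow (shifted s A) x y.
Proof.
rewrite /tpow /shifted bigA_distr.
have split_set (S : {set 'I_N}) :
  \prod_(k < N) (if k \in S then s * id2 (x k) (y k) else A (x k) (y k)) =
  s ^+ #|S| * tens (fun k => if k \in S then id2 else A) x y.
  rewrite /tens (eq_bigr (fun k => (if k \in S then s else 1) *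
     (if k \in S then id2 else A) (x k) (y k))); last first.
    by move=> k _; case: (k \in S); rewrite ?mul1r.
  by rewrite big_split /= -big_mkcond /= prodr_const.
under eq_bigr do rewrite split_set.
rewrite (partition_big (fun S : {set 'I_N} => (inord #|S| : 'I_N.+1)) xpredT) //=.
apply: eq_bigr => j _; rewrite /symsum big_distrr /=.
apply: eq_big => [S|S /eqP <-] //.
by rewrite -val_eqE /= inordK // ltnS -[X in (_ <= X)%N]card_ord max_card.
Qed.

Lemma has_decomp_fin N (rho : op N) (T : finType) (b c d : T -> algC)
    (alpha : T -> 'I_N.+1 -> algC) :
  (forall i, b i \is Num.real) -> (forall i, c i \is Num.real) ->
  (forall i, d i \is Num.real) -> (forall i j, alpha i j \is Num.real) ->
  (forall x y, rho x y = \sum_(i : T) \sum_(j < N.+1)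
                  alpha i j * symsum j (pauliA (b i) (c i) (d i)) x y) ->
  has_decomp rho #|T|.
Proof.
move=> hb hc hd halpha hrho.
exists (b \o enum_val), (c \o enum_val), (d \o enum_val), (alpha \o enum_val).
do 4!split=> //=.
by move=> x y; rewrite hrho (big_enum_val (A := T)).
Qed.

Lemma CS_le_ext N (rho rho' : op N) K :
  (forall x y, rho x y = rho' x y) -> CS_le rho' K -> CS_le rho K.
Proof.
move=> eq_rho [n [leK [b [c [d [alpha [hb [hc [hd [halpha hrho]]]]]]]]]].
exists n; split => //; exists b, c, d, alpha; do 4!split => //.
by move=> x y; rewrite eq_rho hrho.
Qed.

Lemma CS_le0 N : CS_le (fun _ _ : bits N => 0) 0.
Proof.
exists 0%N; split => //; exists (fun _ => 0), (fun _ => 0), (fun _ => 0).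
exists (fun _ _ => 0); do 4!(split; first by move=> *; apply: rpred0).
by move=> x y; rewrite big_ord0.
Qed.

Lemma CS_leD N (rho1 rho2 : op N) K1 K2 :
  CS_le rho1 K1 -> CS_le rho2 K2 ->
  CS_le (fun x y => rho1 x y + rho2 x y) (K1 + K2).
Proof.
move=> [n1 [le1 [b1 [c1 [d1 [a1 [hb1 [hc1 [hd1 [ha1 h1]]]]]]]]]].
move=> [n2 [le2 [b2 [c2 [d2 [a2 [hb2 [hc2 [hd2 [ha2 h2]]]]]]]]]].
exists (n1 + n2)%N; split; first exact: leq_add.
have -> : (n1 + n2)%N = #|{: 'I_n1 + 'I_n2}| by rewrite card_sum !card_ord.
pose sumf (f1 : 'I_n1 -> algC) (f2 : 'I_n2 -> algC) (t : 'I_n1 + 'I_n2) :=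
  match t with inl i => f1 i | inr i => f2 i end.
apply: (@has_decomp_fin _ _ _ (sumf b1 b2) (sumf c1 c2) (sumf d1 d2)
          (fun t j => sumf (a1^~ j) (a2^~ j) t)); try by case.
by move=> x y; rewrite h1 h2 big_sumType.
Qed.

Lemma CS_le_sum N (I : finType) (rho : I -> op N) (K : I -> nat) :
  (forall i, CS_le (rho i) (K i)) ->
  CS_le (fun x y => \sum_(i : I) rho i x y) (\sum_(i : I) K i).
Proof.
move=> hrho; rewrite -big_enum; apply: (@CS_le_ext _ _ (fun x y =>
  \sum_(i <- enum I) rho i x y)); first by move=> x y; rewrite big_enum.
elim: (enum I) => [|i s IH].
  by rewrite big_nil; apply: (CS_le_ext _ (CS_le0 N)) => x y; rewrite big_nil.
rewrite big_cons; apply: (CS_le_ext _ (CS_leD (hrho i) IH)) => x y.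
by rewrite big_cons.
Qed.

Lemma CS_le_comb_tpow N (L : finType) (g s : L -> algC) (b c d : algC) :
  (forall l, g l \is Num.real) -> (forall l, s l \is Num.real) ->
  b \is Num.real -> c \is Num.real -> d \is Num.real ->
  CS_le (fun x y : bits N =>
           \sum_(l : L) g l * tpow (shifted (s l) (pauliA b c d)) x y) 1.
Proof.
move=> hg hs hb hc hd; exists 1%N; split => //.
have -> : 1%N = #|'I_1| by rewrite card_ord.
apply: (@has_decomp_fin _ _ _ (fun _ => b) (fun _ => c) (fun _ => d)
          (fun _ j => \sum_(l : L) g l * s l ^+ j)) => // [_ j|x y].
  by apply: rpred_sum => l _; rewrite rpredM ?rpredX.
rewrite big_ord1 [RHS](eq_bigr _ (fun j _ => mulr_suml _ _ _ _)) exchange_big.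
apply: eq_bigr => l _.
by rewrite -sum_expr_symsum mulr_sumr; apply: eq_bigr => j _; rewrite mulrA.
Qed.

Definition cnt N (x y : bits N) (a b : bool) : nat :=
  #|[set k | (x k, y k) == (a, b)]|.

Lemma prod_cnt N (x y : bits N) (F : bool -> bool -> algC) :
  \prod_(k < N) F (x k) (y k) =
  F false false ^+ cnt x y false false * F true true ^+ cnt x y true true *
  F false true ^+ cnt x y false true * F true false ^+ cnt x y true false.
Proof.
rewrite (partition_big (fun k => (x k, y k)) xpredT) //=.
have prod_class (ab : bool * bool) :
    \prod_(k | (x k, y k) == ab) F (x k) (y k) = F ab.1 ab.2 ^+ cnt x y ab.1 ab.2.
  case: ab => a b; rewrite /cnt -prodr_const.
  by apply: eq_big => [k|k /eqP [-> ->]] //; rewrite inE.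
under eq_bigr do rewrite prod_class.
by rewrite -(pair_bigA _ (fun a b => F a b ^+ cnt x y a b)) /= !big_bool /=; ring.
Qed.

Lemma sum_cnt N (x y : bits N) (F : bool -> bool -> nat) :
  (\sum_(k < N) F (x k) (y k) =
  F false false * cnt x y false false + F true true * cnt x y true true +
  F false true * cnt x y false true + F true false * cnt x y true false)%N.
Proof.
rewrite (partition_big (fun k => (x k, y k)) xpredT) //=.
have sum_class (ab : bool * bool) :
    (\sum_(k | (x k, y k) == ab) F (x k) (y k) = F ab.1 ab.2 * cnt x y ab.1 ab.2)%N.
  case: ab => a b; rewrite /cnt mulnC -sum_nat_const.
  by apply: eq_big => [k|k /eqP [-> ->]] //; rewrite inE.
under eq_bigr do rewrite sum_class.
by rewrite -(pair_bigA _ (fun a b => F a b * cnt x y a b)%N) /= !big_bool /=; lia.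
Qed.

Lemma cnt_total N (x y : bits N) :
  (cnt x y false false + cnt x y true true +
   cnt x y false true + cnt x y true false = N)%N.
Proof. by have := sum_cnt x y (fun _ _ => 1%N); rewrite sum1_card card_ord; lia. Qed.

Lemma weight_sum N (x : bits N) : weight x = (\sum_(k < N) x k)%N.
Proof.
rewrite /weight -sum1_card big_mkcond /=.
by apply: eq_bigr => k _; rewrite inE; case: (x k).
Qed.

Lemma weight_cntl N (x y : bits N) :
  weight x = (cnt x y true true + cnt x y true false)%N.
Proof. by rewrite weight_sum (sum_cnt x y (fun a _ => nat_of_bool a)) /=; lia. Qed.

Lemma weight_cntr N (x y : bits N) :
  weight y = (cnt x y true true + cnt x y false true)%N.
Proof. by rewrite weight_sum (sum_cnt x y (fun _ b => nat_of_bool b)) /=; lia.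
Qed.

Lemma tpow_shifted_pauli N (s w : algC) (x y : bits N) :
  tpow (shifted s (pauliA ('Re w) ('Im w) 1)) x y =
  (s + 1) ^+ cnt x y false false * (s - 1) ^+ cnt x y true true *
  (w^* ^+ cnt x y false true * w ^+ cnt x y true false).
Proof.
have w_rect : 'Re w + 'Im w * 'i = w by rewrite mulrC -Crect.
have wc_rect : 'Re w - 'Im w * 'i = w^*.
  by rewrite {3}(Crect w) conjC_rect ?Creal_Re ?Creal_Im // mulrC.
rewrite -wc_rect -[X in _ * X ^+ cnt x y true false]w_rect /tpow prod_cnt.
rewrite /shifted /pauliA /id2 /sigmaX /sigmaY /sigmaZ /=.
by rewrite !(mulr1, mulr0, mul1r, add0r, addr0, mulrN) mulrA.
Qed.

(* Any N + 1 reals s <> -1 with pairwise distinct (s-1)/(s+1) would do. *)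
Definition shift N (l : 'I_N.+1) : algC := (l + 2)%:R.

Lemma shift_real N (l : 'I_N.+1) : shift l \is Num.real.
Proof. exact: realn. Qed.

Definition dirop N (w : algC) (g : 'I_N.+1 -> algC) : op N :=
  fun x y => \sum_(l < N.+1)
    g l * tpow (shifted (shift l) (pauliA ('Re w) ('Im w) 1)) x y.

Definition wmoment N (g : 'I_N.+1 -> algC) (a p : nat) : algC :=
  \sum_(l < N.+1) g l * ((shift l + 1) ^+ a * (shift l - 1) ^+ p).

Lemma wmoment_real N (g : 'I_N.+1 -> algC) a p :
  (forall l, g l \is Num.real) -> wmoment g a p \is Num.real.
Proof.
move=> g_real; apply: rpred_sum => l _.
by apply: rpredM; rewrite ?g_real ?rpredM ?rpredX ?rpredD ?rpredN ?shift_real ?rpred1.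
Qed.

Lemma wmomentZ N (c : algC) (g : 'I_N.+1 -> algC) a p :
  wmoment (fun l => c * g l) a p = c * wmoment g a p.
Proof. by rewrite /wmoment mulr_sumr; apply: eq_bigr => l _; rewrite [RHS]mulrA. Qed.

Lemma CS_le_dirop N (w : algC) (g : 'I_N.+1 -> algC) :
  (forall l, g l \is Num.real) -> CS_le (dirop w g) 1.
Proof.
move=> hg; apply: CS_le_comb_tpow => //; rewrite ?Creal_Re ?Creal_Im //.
exact: shift_real.
Qed.

Lemma dirop_cnt N (w : algC) (g : 'I_N.+1 -> algC) (x y : bits N) :
  dirop w g x y = wmoment g (cnt x y false false) (cnt x y true true) *
                  (w^* ^+ cnt x y false true * w ^+ cnt x y true false).
Proof.
rewrite /dirop /wmoment big_distrl; apply: eq_bigr => l _.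
by rewrite tpow_shifted_pauli /= !mulrA.
Qed.

(* The exact Vandermonde solution is real when t and v are; taking ['Re] makes
   realness unconditional. *)
Definition interp K (t : 'I_K.+1 -> algC) (v : nat -> algC) (l : 'I_K.+1) : algC :=
  'Re ((invmx (Vandermonde K.+1 (\row_l t l)) *m \col_(p < K.+1) v p) l 0).

Lemma interp_real K (t : 'I_K.+1 -> algC) v l : interp t v l \is Num.real.
Proof. exact: Creal_Re. Qed.

Lemma interpP K (t : 'I_K.+1 -> algC) (v : nat -> algC) (p : nat) :
  injective t -> (forall l, t l \is Num.real) -> (forall q, v q \is Num.real) ->
  (p <= K)%N -> \sum_(l < K.+1) interp t v l * t l ^+ p = v p.
Proof.
move=> t_inj t_real v_real lepK.
set V := Vandermonde K.+1 (\row_l t l).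
have V_unit : V \in unitmx.
  rewrite unitmxE unitfE det_Vandermonde; apply/prodf_neq0 => i _.
  apply/prodf_neq0 => j lt_ij; rewrite !mxE subr_eq0; apply/eqP => /t_inj ji.
  by rewrite ji ltnn in lt_ij.
have := congr1 (fun M : 'M_(K.+1, 1) => 'Re (M (inord p) 0))
                (mulKVmx V_unit (\col_(q < K.+1) v q)).
rewrite !mxE inordK // (Creal_ReP _ (v_real p)) => <-.
rewrite raddf_sum; apply: eq_bigr => l _.
by rewrite /V !mxE inordK //= ReMl ?rpredX // mulrC /interp !mxE.
Qed.

Definition hinterp N K (v : nat -> algC) (l : 'I_N.+1) : algC :=
  interp (fun l : 'I_N.+1 => (shift l - 1) / (shift l + 1)) v l / (shift l + 1) ^+ K.

Lemma hinterp_real N K v (l : 'I_N.+1) : hinterp K v l \is Num.real.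
Proof. by rewrite rpredM ?rpredV ?rpredX ?rpredD ?interp_real ?shift_real ?rpred1. Qed.

Lemma hinterpP N K (v : nat -> algC) (p : nat) :
  (K <= N)%N -> (forall q, v q \is Num.real) -> (p <= K)%N ->
  wmoment (hinterp K v : 'I_N.+1 -> algC) (K - p) p = v p.
Proof.
move=> leKN v_real lepK.
have shiftD1 (l : 'I_N.+1) : shift l + 1 = (l + 3)%:R by rewrite /shift natr1 -addnS.
have shiftB1 (l : 'I_N.+1) : shift l - 1 = (l + 1)%:R.
  by rewrite /shift addnS -natr1 addrK.
have shiftD1_neq0 (l : 'I_N.+1) : shift l + 1 != 0 by rewrite shiftD1 pnatr_eq0 addn3.
pose t (l : 'I_N.+1) := (shift l - 1) / (shift l + 1).
have t_inj : injective t.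
  move=> a b /eqP; rewrite /t eqr_div ?shiftD1_neq0 //.
  rewrite !shiftB1 !shiftD1 -!natrM eqr_nat.
  by move=> /eqP eq_ab; apply/val_inj => /=; nia.
rewrite /wmoment -(interpP t_inj _ v_real (leq_trans lepK leKN)); last first.
  by move=> l; rewrite /t shiftB1 shiftD1 rpredM ?rpredV ?realn.
apply: eq_bigr => l _; rewrite /hinterp /t -{1}(subnK lepK) exprD expr_div_n.
by field; rewrite ?expf_neq0 ?shiftD1_neq0.
Qed.

Definition proot (n : nat) : algC := sval (C_prim_root_exists (ltn0Sn n)).

Lemma proot_prim n : n.+1.-primitive_root (proot n).
Proof. exact: (svalP (C_prim_root_exists (ltn0Sn n))). Qed.

Lemma sum_prim_root_conjX M (z : algC) (u v : nat) :
  M.-primitive_root z -> (u < M)%N -> (v < M)%N ->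
  \sum_(k < M) (z ^+ k)^* ^+ u * (z ^+ k) ^+ v = (u == v)%:R * M%:R.
Proof.
move=> z_prim ltuM ltvM.
have zM := prim_expr_order z_prim.
have z_norm : `|z| = 1.
  apply/eqP; rewrite -(pexpr_eq1 (prim_order_gt0 z_prim)) ?normr_ge0 //.
  by rewrite -normrX zM normr1.
have conj_zK : z^* * z = 1 by rewrite -normCKC z_norm expr1n.
pose zeta := z^* ^+ u * z ^+ v.
have zetaX k : (z ^+ k)^* ^+ u * (z ^+ k) ^+ v = zeta ^+ k.
  by rewrite exprMn rmorphXn /= -!exprM mulnC exprM [in RHS]mulnC exprM.
under eq_bigr do rewrite zetaX.
have [eq_uv|neq_uv] := eqVneq u v.
  rewrite /zeta eq_uv -exprMn conj_zK expr1n mul1r.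
  by rewrite (eq_bigr (fun _ => 1)) ?sumr_const ?card_ord // => k _; rewrite expr1n.
have zeta_neq1 : zeta != 1.
  apply: contra_neq neq_uv => zeta1.
  have : z ^+ u * zeta = z ^+ u by rewrite zeta1 mulr1.
  rewrite /zeta mulrA -exprMn (mulrC z) conj_zK expr1n mul1r => /eqP.
  by rewrite (eq_prim_root_expr z_prim) !modn_small // => /eqP.
have zetaM : zeta ^+ M = 1.
  by rewrite /zeta exprMn -!exprM mulnC exprM -rmorphXn zM rmorph1 expr1n
    mulnC exprM zM expr1n mulr1.
have : (zeta - 1) * \sum_(k < M) zeta ^+ k = 0 by rewrite -subrX1 zetaM subrr.
by move/eqP; rewrite mulf_eq0 subr_eq0 (negbTE zeta_neq1) mul0r => /eqP.
Qed.

Lemma dicke_proj_weight N m (x y : bits N) :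
  dicke_proj m x y =
  ('C(N, m)%:R)^-1 * ((weight x == m) && (weight y == m))%:R.
Proof.
set s : algC := sqrtC 'C(N, m)%:R.
have s_real : s \is Num.real by apply: ger0_real; rewrite sqrtC_ge0 ler0n.
have s_normE : s^-1 * (s^-1)^* = ('C(N, m)%:R)^-1.
  by rewrite fmorphV /= (conj_Creal s_real) -invfM -expr2 sqrtCK.
rewrite /dicke_proj /dicke -/s.
by case: (weight x == m); case: (weight y == m);
  rewrite ?rmorph0 ?mulr0 ?mul0r ?mulr1 ?s_normE.
Qed.

Definition nangles (r : nat) : nat := (4 * r + 4).+1.

Lemma sum_nangles m : (\sum_(r < m) nangles r = m * (2 * m + 3))%N.
Proof.
by elim: m => [|m IH]; rewrite ?big_ord0 // big_ord_recr /= IH /nangles; lia.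
Qed.

Section DickeDecomposition.

Variables N m : nat.

Definition dicke_coef : algC := ('C(N, m)%:R)^-1.

Definition radial_coef (r : nat) : 'I_N.+1 -> algC :=
  interp (fun i : 'I_N.+1 => i%:R) (fun q => (q == 2 * r.+1)%N%:R).

Definition block_weights (r : nat) : 'I_N.+1 -> algC :=
  hinterp (N - 2 * r.+1) (fun p => dicke_coef * (p == m - r.+1)%N%:R).

(* The radius-0 node of [radial_coef r] is not a direction: its contribution,
   confined to the entries with u = v = 0, is compensated here. *)
Definition diag_weights : 'I_N.+1 -> algC :=
  hinterp N (fun p => dicke_coef * (p == m)%N%:R +
    \sum_(r < m) radial_coef r ord0 * wmoment (block_weights r) (N - p) p).

Definition block_term (r k : nat) (i : 'I_N) : op N :=
  dirop ((i.+1)%:R * proot (4 * r + 4) ^+ k)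
        (fun l => radial_coef r (lift ord0 i) / (nangles r)%:R * block_weights r l).

Lemma dicke_coef_real : dicke_coef \is Num.real.
Proof. by rewrite rpredV realn. Qed.

Lemma sum_radial_coef r q : (q <= N)%N ->
  \sum_(i < N) radial_coef r (lift ord0 i) * (i.+1)%:R ^+ q =
  (q == 2 * r.+1)%N%:R - radial_coef r ord0 * (q == 0)%N%:R.
Proof.
move=> leqN.
have := @interpP N (fun i : 'I_N.+1 => i%:R) (fun q => (q == 2 * r.+1)%N%:R) q.
rewrite big_ord_recl expr0n -/(radial_coef r) => <- //.
- by rewrite addrC addKr.
- by move=> i j /eqP; rewrite eqr_nat => /eqP /val_inj.
Qed.

Lemma block_term_cnt r k (i : 'I_N) (x y : bits N) :
  let z := proot (4 * r + 4) ^+ k in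
  block_term r k i x y =
  radial_coef r (lift ord0 i) / (nangles r)%:R *
  wmoment (block_weights r) (cnt x y false false) (cnt x y true true) *
  (i.+1)%:R ^+ (cnt x y false true + cnt x y true false) *
  (z^* ^+ cnt x y false true * z ^+ cnt x y true false).
Proof.
by rewrite /block_term dirop_cnt wmomentZ rmorphM /= rmorph_nat !exprMn exprD; ring.
Qed.

Lemma sum_block_term r (x y : bits N) :
  let u := cnt x y false true in let v := cnt x y true false in
  \sum_(k < nangles r) \sum_(i < N) block_term r k i x y =
  wmoment (block_weights r) (cnt x y false false) (cnt x y true true) *
  (((u + v == 2 * r.+1) && (u == v))%N%:R - radial_coef r ord0 * (u + v == 0)%N%:R).
Proof.
move=> u v; set w := wmoment _ _ _.
have le_uvN : (u + v <= N)%N by have := cnt_total x y; lia.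
have M_neq0 : (nangles r)%:R != 0 :> algC by rewrite pnatr_eq0.
under eq_bigr do under eq_bigr do rewrite block_term_cnt.
transitivity (w / (nangles r)%:R *
  (\sum_(i < N) radial_coef r (lift ord0 i) * (i.+1)%:R ^+ (u + v)) *
  \sum_(k < nangles r)
    ((proot (4 * r + 4) ^+ k)^* ^+ u * (proot (4 * r + 4) ^+ k) ^+ v)).
  rewrite mulr_sumr; apply: eq_bigr => k _; rewrite mulr_sumr mulr_suml.
  by apply: eq_bigr => i _; rewrite -/u -/v -/w; ring.
rewrite sum_radial_coef //.
have [uv0|uv_neq0] := eqVneq (u + v)%N 0%N.
  have [-> ->] : u = 0%N /\ v = 0%N by lia.
  by rewrite sum_prim_root_conjX ?proot_prim //=; field.
have [uv2|uv_neq2] := eqVneq (u + v)%N (2 * r.+1)%N.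
  rewrite sum_prim_root_conjX ?proot_prim /=; try by rewrite /nangles; lia.
  by field.
by rewrite /= !(mulr0, subr0, mul0r).
Qed.

Lemma wmoment_diag_weights p : (p <= N)%N ->
  wmoment diag_weights (N - p) p = dicke_coef * (p == m)%N%:R +
    \sum_(r < m) radial_coef r ord0 * wmoment (block_weights r) (N - p) p.
Proof.
move=> lepN; rewrite hinterpP // => q.
rewrite rpredD ?rpredM ?dicke_coef_real ?realn //.
apply: rpred_sum => r _; rewrite rpredM ?interp_real //.
by apply: wmoment_real => l; apply: hinterp_real.
Qed.

Lemma wmoment_block_weights r p : (p <= N - 2 * r.+1)%N ->
  wmoment (block_weights r) (N - 2 * r.+1 - p) p = dicke_coef * (p == m - r.+1)%N%:R.
Proof.
move=> lep; rewrite hinterpP ?leq_subr // => q.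
by rewrite rpredM ?dicke_coef_real ?realn.
Qed.

Lemma sum_block_offdiag a p u v : (a + p + u + v = N)%N -> (u + v != 0)%N ->
  \sum_(r < m) wmoment (block_weights r) a p * ((u + v == 2 * r.+1) && (u == v))%N%:R =
  dicke_coef * ((p + v == m) && (p + u == m))%N%:R.
Proof.
move=> total uv_neq0.
have [eq_uv|neq_uv] := eqVneq u v; last first.
  rewrite big1 => [|r _]; last by rewrite andbF mulr0.
  rewrite (_ : (_ && _) = false) ?mulr0 //.
  by apply/negbTE/andP => -[/eqP ? /eqP ?]; move/eqP: neq_uv; lia.
rewrite -eq_uv andbb; under eq_bigr do rewrite andbT.
have [le_um|lt_mu] := leqP u m; last first.
  rewrite (_ : (p + u == m)%N = false) ?mulr0; last by apply/eqP; lia.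
  apply: big1 => r _; rewrite (_ : (u + u == 2 * r.+1)%N = false) ?mulr0 //.
  by apply/eqP; have := ltn_ord r; lia.
have lt_u1m : (u.-1 < m)%N by lia.
rewrite (bigD1 (Ordinal lt_u1m)) //= big1 ?addr0 => [|r neq_r].
  rewrite (_ : (u + u == 2 * u.-1.+1)%N) ?mulr1; last by apply/eqP; lia.
  rewrite (_ : a = N - 2 * u.-1.+1 - p)%N ?wmoment_block_weights; try lia.
  by congr (_ * _%:R); apply/eqP/eqP; lia.
rewrite (_ : (u + u == 2 * r.+1)%N = false) ?mulr0 //.
by apply/eqP => eq_uur; move/eqP: neq_r; apply; apply: val_inj => /=; lia.
Qed.

Lemma dicke_proj_decomp (x y : bits N) :
  dicke_proj m x y = dirop 0 diag_weights x y +
    \sum_(r < m) \sum_(k < nangles r) \sum_(i < N) block_term r k i x y.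
Proof.
rewrite dicke_proj_weight (weight_cntl x y) (weight_cntr x y) dirop_cnt -/dicke_coef.
under eq_bigr do rewrite sum_block_term.
rewrite rmorph0 -exprD expr0n.
have := cnt_total x y.
set a := cnt x y false false; set p := cnt x y true true.
set u := cnt x y false true; set v := cnt x y true false => total.
have [uv0|uv_neq0] := eqVneq (u + v)%N 0%N; last first.
  rewrite mulr0n mulr0 add0r -(sum_block_offdiag total uv_neq0).
  by apply: eq_bigr => r _; rewrite mulr0 subr0.
have [u0 v0] : u = 0%N /\ v = 0%N by lia.
rewrite (_ : a = N - p)%N; last by lia.
rewrite u0 v0 !addn0 andbb mulr1 wmoment_diag_weights; last by lia.
rewrite -addrA -big_split /= big1 ?addr0 // => r _.
by rewrite mulr1 sub0r mulrN mulrC subrr.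
Qed.

End DickeDecomposition.

Theorem theorem3 (N m : nat) (hN : (1 <= N)%N) (hm1 : (1 <= m)%N) (hmN : (m <= N)%N) :
  CS_le (@dicke_proj N m) (m * (2 * m + 3) * N + 1)%N.
Proof.
(* The decomposition holds for all N and m. *)
apply: CS_le_ext (@dicke_proj_decomp N m) _.
have -> : (m * (2 * m + 3) * N + 1 =
           1 + \sum_(r < m) \sum_(k < nangles r) \sum_(i < N) 1)%N.
  rewrite addnC -sum_nangles big_distrl /=; congr (_ + _)%N.
  by apply: eq_bigr => r _; rewrite big_const_ord iter_addn_0 sum1_card card_ord mulnC.
apply: CS_leD; first by apply: CS_le_dirop => l; apply: hinterp_real.
do 3!(apply: CS_le_sum => ?).
apply: CS_le_dirop => l.
by rewrite rpredM ?hinterp_real ?rpredM ?rpredV ?interp_real ?realn.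
Qed.
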